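(* Let $0<\eta<1$, $I=[\eta,1]$, and $\mathcal{D}$ as in the context. For every $s\in(0,1)$ and every $k\ge0$, the function $x\mapsto (x^s+k)^{-1}$ on $I$ belongs to $\mathscr{L}_1(\mathcal{D})$.
   Context: Dictionary: for $b\in(0,\infty)$ let $g(x,b)=\frac{\eta+b}{x+b}$ on $I$, and $\mathcal{D}=\{g(\cdot,b):b\in(0,\infty)\}\subset L^\infty(I)$. $B_1(\mathcal{D})$ is the closure in $L^\infty(I)$ of $\{\sum_{j=1}^m c_jg_j: m\in\mathbb{N}, g_j\in\mathcal{D}, \sum_j|c_j|\le1\}$; $\|f\|_{\mathscr{L}_1(\mathcal{D})}=\inf\{c>0: f\in cB_1(\mathcal{D})\}$; $\mathscr{L}_1(\mathcal{D})=\{f:\|f\|_{\mathscr{L}_1(\mathcal{D})}<\infty\}$. *)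

From Stdlib Require Import Reals List.
Open Scope R_scope.

Definition dict (eta b x : R) : R := (eta + b) / (x + b).

Definition comb (eta : R) (l : list (R * R)) (x : R) : R :=
  fold_right (fun p acc => fst p * dict eta (snd p) x + acc) 0 l.

Definition coef_l1 (l : list (R * R)) : R :=
  fold_right (fun p acc => Rabs (fst p) + acc) 0 l.

(* all b_j lie in (0, oo), i.e. each g(., b_j) is in the dictionary D *)
Definition params_pos (l : list (R * R)) : Prop :=
  forall p, In p l -> 0 < snd p.

(* f belongs to c * B_1(D), where B_1(D) is the closure in the sup norm on
   I = [eta,1] (= L^oo(I) norm for these continuous functions) of the
   absolutely convex combinations of dictionary elements.  For c > 0,
   c * conv = combinations with sum |c_j| <= c. *)
Definition in_scaled_B1 (eta c : R) (f : R -> R) : Prop :=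
  forall eps, 0 < eps ->
    exists l : list (R * R),
      params_pos l /\ coef_l1 l <= c /\
      forall x, eta <= x <= 1 -> Rabs (f x - comb eta l x) <= eps.

(* f in script-L_1(D): the L_1(D) norm inf{c > 0 : f in c B_1(D)} is finite,
   i.e. the set is nonempty. *)
Definition in_L1D (eta : R) (f : R -> R) : Prop :=
  exists c, 0 < c /\ in_scaled_B1 eta c f.

(* For q > 1 the bi-infinite series S(x) = sum_(e in Z) q^(s e) x / (x + q^e)
   satisfies S(q x) = q^s S(x), so S(x) / (S(1) x^s) stays within a factor q^s of 1
   on (0, 1].  Truncating S with q close to 1 approximates x^s uniformly on [eta, 1]
   by finite sums A(x) = sum_j w_j x / (x + t_j) with w_j, t_j > 0.
   For phi = k + eps + A, the numerator of phi has its zeros r_i interlaced with the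
   poles -t_j, and the partial fraction expansion of 1 / phi has positive residues:
   1 / phi(x) = 1 / phi(oo) + sum_i c_i / (x - r_i) with c_i > 0.  Each c / (x + b)
   is c / (eta + b) times the dictionary element g(., b), the constant 1 / phi(oo) is a
   uniform limit of multiples of g(., b) as b -> oo, and the total weight 1 / phi(eta)
   is at most eta^(-s).  Letting eps -> 0 puts 1 / (x^s + k) in eta^(-s) B_1(D). *)

From Stdlib Require Import Reals Lra Lia List.
From Coquelicot Require Import Coquelicot.
From mathcomp Require all_boot all_order all_algebra zify ring polyrcf Rstruct.
Open Scope R_scope.

Definition pfrac (l : list (R * R)) (x : R) : R :=
  fold_right (fun p acc => fst p / (x + snd p) + acc) 0 l.

Definition pfrac_pos (l : list (R * R)) : Prop :=
  forall p, In p l -> 0 <= fst p /\ 0 < snd p.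

Lemma pfrac_pos_cons p l : pfrac_pos (p :: l) -> (0 <= fst p /\ 0 < snd p) /\ pfrac_pos l.
Proof. intros H; split; [apply H; left | intros p' hp'; apply H; right]; auto. Qed.

(* [c / (x + b)] is the dictionary element [g(., b)] scaled by [c / (eta + b)]. *)
Definition pfrac_to_dict (eta : R) (l : list (R * R)) : list (R * R) :=
  map (fun p => (fst p / (eta + snd p), snd p)) l.

Lemma comb_pfrac_to_dict eta l x : 0 < eta -> 0 <= x -> pfrac_pos l ->
  comb eta (pfrac_to_dict eta l) x = pfrac l x.
Proof.
intros he hx; induction l as [|p l IH]; intros hl; simpl; [reflexivity|].
destruct (pfrac_pos_cons p l hl) as [[_ hb] hl'].
rewrite IH by exact hl'. unfold dict. f_equal. field. split; lra.
Qed.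

Lemma coef_l1_pfrac_to_dict eta l : 0 < eta -> pfrac_pos l ->
  coef_l1 (pfrac_to_dict eta l) = pfrac l eta.
Proof.
intros he; induction l as [|p l IH]; intros hl; simpl; [reflexivity|].
destruct (pfrac_pos_cons p l hl) as [[hc hb] hl'].
rewrite IH, Rabs_pos_eq by (auto; apply Rdiv_le_0_compat; lra). reflexivity.
Qed.

Lemma params_pos_pfrac_to_dict eta l : pfrac_pos l -> params_pos (pfrac_to_dict eta l).
Proof.
intros hl p hp. apply in_map_iff in hp. destruct hp as [p' [<- hp']]. apply (hl p' hp').
Qed.

Lemma in_scaled_B1_le eta c c' f : c <= c' -> in_scaled_B1 eta c f -> in_scaled_B1 eta c' f.
Proof.
intros hc hf eps heps. destruct (hf eps heps) as [l [hl [hl1 happ]]].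
exists l; repeat split; auto; lra.
Qed.

Lemma in_scaled_B1_approx eta c f :
  (forall eps, 0 < eps -> exists g, in_scaled_B1 eta c g /\
     forall x, eta <= x <= 1 -> Rabs (f x - g x) <= eps) ->
  in_scaled_B1 eta c f.
Proof.
intros happ eps heps.
destruct (happ (eps / 2)) as [g [hg hfg]]; [lra|].
destruct (hg (eps / 2)) as [l [hl [hl1 hgl]]]; [lra|].
exists l; repeat split; auto. intros x hx.
replace (f x - comb eta l x) with ((f x - g x) + (g x - comb eta l x)) by ring.
eapply Rle_trans; [apply Rabs_triang|].
specialize (hfg x hx); specialize (hgl x hx); lra.
Qed.

(* The constant [c0] is the limit of [c0 * g(., b)] as [b -> oo], uniformly on [[eta, 1]]. *)
Lemma const_add_pfrac_in_scaled_B1 eta c0 l : 0 < eta -> 0 <= c0 -> pfrac_pos l ->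
  in_scaled_B1 eta (c0 + pfrac l eta) (fun x => c0 + pfrac l x).
Proof.
intros he hc0 hl eps heps.
set (b := (c0 + 1) / eps).
assert (hb : 0 < b) by (apply Rdiv_lt_0_compat; lra).
exists ((c0, b) :: pfrac_to_dict eta l); repeat split.
- intros p [<- | hp]; [exact hb | exact (params_pos_pfrac_to_dict eta l hl p hp)].
- simpl. rewrite coef_l1_pfrac_to_dict, Rabs_pos_eq by auto. lra.
- intros x hx. simpl. rewrite comb_pfrac_to_dict by (auto; lra). unfold dict.
  replace (c0 + pfrac l x - (c0 * ((eta + b) / (x + b)) + pfrac l x))
    with (c0 * ((x - eta) / (x + b))) by (field; lra).
  assert (hfrac : 0 <= (x - eta) / (x + b) <= / b).
  { split; [apply Rdiv_le_0_compat; lra|].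
    apply Rmult_le_reg_r with ((x + b) * b); [nra|]. field_simplify; nra. }
  rewrite Rabs_pos_eq by nra.
  apply Rle_trans with (c0 * / b); [apply Rmult_le_compat_l; lra|].
  unfold b. rewrite Rinv_div. apply Rmult_le_reg_r with (c0 + 1); [lra|].
  field_simplify; nra.
Qed.

Lemma Rpower_pos x y : 0 < Rpower x y.
Proof. apply exp_pos. Qed.

Lemma Rpower_mul_INR x a n : 0 < x -> Rpower x (a * INR n) = Rpower x a ^ n.
Proof. intros hx. rewrite <- Rpower_mult, Rpower_pow by apply Rpower_pos. reflexivity. Qed.

Lemma Rpower_lt_1 x y : 1 < x -> y < 0 -> Rpower x y < 1.
Proof. intros hx hy. rewrite <- (Rpower_O x) by lra. apply Rpower_lt; lra. Qed.

Lemma Rpower_gt_1 x y : 1 < x -> 0 < y -> 1 < Rpower x y.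
Proof. intros hx hy. apply Rle_lt_trans with (Rpower x 0); [rewrite Rpower_O; lra | apply Rpower_lt; lra]. Qed.

Lemma Rpower_le_1 x y : 0 < x <= 1 -> 0 <= y -> Rpower x y <= 1.
Proof.
intros hx hy. apply Rle_trans with (Rpower 1 y); [apply Rle_Rpower_l; lra|].
unfold Rpower. rewrite ln_1, Rmult_0_r, exp_0. lra.
Qed.

Lemma Rpower_inv_base x y : 0 < x -> Rpower (/ x) y = / Rpower x y.
Proof. intros hx. unfold Rpower. rewrite ln_Rinv, <- exp_Ropp by exact hx. f_equal; ring. Qed.

Lemma frac_le_1 x c : 0 <= x -> 0 < c -> x / (x + c) <= 1.
Proof. intros hx hc. apply Rmult_le_reg_r with (x + c); [lra|]. field_simplify; lra. Qed.

Lemma Series_ge0 a : (forall n, 0 <= a n) -> ex_series a -> 0 <= Series a.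
Proof.
intros ha hex. rewrite <- (Rmult_0_l (Series a)), <- Series_scal_l.
apply Series_le; [|exact hex]. intros n. rewrite Rmult_0_l. split; [lra | apply ha].
Qed.

Section GeometricSeries.
Variables s q : R.
Hypotheses (hs : 0 < s < 1) (hq : 1 < q).

Let q_pos : 0 < q. Proof. lra. Qed.

Definition geom_term (e x : R) : R := Rpower q (s * e) * x / (x + Rpower q e).

Lemma geom_term_ge0 e x : 0 <= x -> 0 <= geom_term e x.
Proof.
intros hx. unfold geom_term. apply Rdiv_le_0_compat.
- apply Rmult_le_pos; [apply Rlt_le, Rpower_pos | exact hx].
- generalize (Rpower_pos q e); lra.
Qed.

Lemma geom_term_le_incr e x y : 0 <= x <= y -> geom_term e x <= geom_term e y.
Proof.
intros hxy. unfold geom_term.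
generalize (Rpower_pos q e) (Rpower_pos q (s * e)); intros ht hw.
apply Rmult_le_reg_r with ((x + Rpower q e) * (y + Rpower q e)); [nra|].
field_simplify; [|lra|lra].
assert (0 < Rpower q (s * e) * Rpower q e) by nra. nra.
Qed.

Lemma geom_term_le_weight e x : 0 <= x -> geom_term e x <= Rpower q (s * e).
Proof.
intros hx. unfold geom_term, Rdiv. rewrite Rmult_assoc.
rewrite <- (Rmult_1_r (Rpower q (s * e))) at 2.
apply Rmult_le_compat_l; [apply Rlt_le, Rpower_pos|].
apply frac_le_1; [exact hx | apply Rpower_pos].
Qed.

Lemma geom_term_le_lin e x : 0 <= x -> geom_term e x <= x * Rpower q ((s - 1) * e).
Proof.
intros hx. unfold geom_term.
replace ((s - 1) * e) with (s * e + - e) by ring.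
rewrite Rpower_plus, Rpower_Ropp.
generalize (Rpower_pos q e) (Rpower_pos q (s * e)); intros ht hw.
apply Rmult_le_reg_r with (Rpower q e * (x + Rpower q e)); [nra|].
field_simplify; nra.
Qed.

Lemma geom_term_scale e x : 0 <= x -> geom_term e (q * x) = Rpower q s * geom_term (e - 1) x.
Proof.
intros hx. unfold geom_term.
replace (s * e) with (s + s * (e - 1)) by ring.
replace e with (1 + (e - 1)) at 2 by ring.
rewrite !Rpower_plus, Rpower_1 by exact q_pos.
generalize (Rpower_pos q (e - 1)); intros ht.
field; repeat split; nra.
Qed.

(* Pairs the exponents [n] and [-(n+1)]: [Series geom_pair] sums over all of [Z]. *)
Definition geom_pair (n : nat) (x : R) : R := geom_term (INR n) x + geom_term (- INR (S n)) x.

Lemma geom_pair_ge0 n x : 0 <= x -> 0 <= geom_pair n x.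
Proof.
intros hx. unfold geom_pair.
generalize (geom_term_ge0 (INR n) x hx) (geom_term_ge0 (- INR (S n)) x hx); lra.
Qed.

Lemma geom_pair_le_incr n x y : 0 <= x <= y -> geom_pair n x <= geom_pair n y.
Proof.
intros hxy. unfold geom_pair.
generalize (geom_term_le_incr (INR n) x y hxy) (geom_term_le_incr (- INR (S n)) x y hxy); lra.
Qed.

Lemma ex_series_geom_term_pos x : 0 <= x -> ex_series (fun n => geom_term (INR n) x).
Proof.
intros hx.
apply (@ex_series_le R_AbsRing R_CompleteNormedModule) with (fun n => x * Rpower q (s - 1) ^ n).
- intros n. change norm with Rabs. rewrite Rabs_pos_eq by (apply geom_term_ge0, hx).
  rewrite <- Rpower_mul_INR by exact q_pos. apply geom_term_le_lin, hx.
- apply (ex_series_scal x (fun n => Rpower q (s - 1) ^ n)), ex_series_geom.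
  rewrite Rabs_pos_eq by apply Rlt_le, Rpower_pos. apply Rpower_lt_1; lra.
Qed.

Lemma ex_series_geom_term_neg x : 0 <= x -> ex_series (fun n => geom_term (- INR (S n)) x).
Proof.
intros hx.
apply (@ex_series_le R_AbsRing R_CompleteNormedModule) with (fun n => Rpower q (- s) ^ S n).
- intros n. change norm with Rabs. rewrite Rabs_pos_eq by (apply geom_term_ge0, hx).
  rewrite <- Rpower_mul_INR by exact q_pos.
  replace (- s * INR (S n)) with (s * - INR (S n)) by ring. apply geom_term_le_weight, hx.
- apply ex_series_incr_1 with (a := fun n => Rpower q (- s) ^ n), ex_series_geom.
  rewrite Rabs_pos_eq by apply Rlt_le, Rpower_pos. apply Rpower_lt_1; lra.
Qed.

Definition geom_series (x : R) : R := Series (fun n => geom_pair n x).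

Lemma geom_series_split x : 0 <= x ->
  geom_series x = Series (fun n => geom_term (INR n) x) + Series (fun n => geom_term (- INR (S n)) x).
Proof.
intros hx. apply Series_plus; [apply ex_series_geom_term_pos | apply ex_series_geom_term_neg]; exact hx.
Qed.

Lemma ex_series_geom_pair x : 0 <= x -> ex_series (fun n => geom_pair n x).
Proof.
intros hx. apply (ex_series_plus (fun n => geom_term (INR n) x) (fun n => geom_term (- INR (S n)) x));
  [apply ex_series_geom_term_pos | apply ex_series_geom_term_neg]; exact hx.
Qed.

(* Scaling [x] by [q] shifts the bi-infinite family of nodes [q^e] by one step. *)
Lemma geom_series_scale x : 0 <= x -> geom_series (q * x) = Rpower q s * geom_series x.
Proof.
intros hx. assert (hqx : 0 <= q * x) by nra.
rewrite (geom_series_split _ hqx), (geom_series_split _ hx).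
rewrite (Series_incr_1 (fun n => geom_term (INR n) (q * x))) by (apply ex_series_geom_term_pos; exact hqx).
rewrite (Series_incr_1 (fun n => geom_term (- INR (S n)) x)) by (apply ex_series_geom_term_neg; exact hx).
rewrite (Series_ext (fun k => geom_term (INR (S k)) (q * x)) (fun k => Rpower q s * geom_term (INR k) x))
  by (intros k; rewrite geom_term_scale, S_INR by exact hx; do 2 f_equal; ring).
rewrite (Series_ext (fun k => geom_term (- INR (S k)) (q * x))
                    (fun k => Rpower q s * geom_term (- INR (S (S k))) x))
  by (intros k; rewrite geom_term_scale, (S_INR (S k)) by exact hx; do 2 f_equal; ring).
rewrite !Series_scal_l, geom_term_scale by exact hx.
replace (INR 0 - 1) with (- INR 1) by (simpl; ring). ring.
Qed.

Lemma geom_series_le_incr x y : 0 <= x <= y -> geom_series x <= geom_series y.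
Proof.
intros hxy. apply Series_le; [|apply ex_series_geom_pair; lra].
intros n. split; [apply geom_pair_ge0 | apply geom_pair_le_incr]; lra.
Qed.

Lemma geom_series_1_pos : 0 < geom_series 1.
Proof.
unfold geom_series. rewrite Series_incr_1 by (apply ex_series_geom_pair; lra).
assert (h0 : 0 < geom_pair 0 1).
{ assert (h0 : geom_term 0 1 = / 2).
  { unfold geom_term. rewrite Rmult_0_r, Rpower_O by exact q_pos. field. }
  unfold geom_pair. simpl INR. rewrite h0. generalize (geom_term_ge0 (- (1)) 1). lra. }
assert (0 <= Series (fun k => geom_pair (S k) 1)).
{ apply Series_ge0; [intros k; apply geom_pair_ge0; lra|].
  apply (ex_series_incr_1 (fun n => geom_pair n 1)), ex_series_geom_pair; lra. }
lra.
Qed.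

Lemma geom_series_ratio_top x : / q < x <= 1 ->
  / Rpower q s * geom_series 1 * Rpower x s <= geom_series x <= Rpower q s * geom_series 1 * Rpower x s.
Proof.
intros hx.
assert (hiq : 0 < / q) by (apply Rinv_0_lt_compat; lra).
assert (hsig : 1 < Rpower q s) by (apply Rpower_gt_1; lra).
assert (hS1 := geom_series_1_pos).
assert (hS1q : geom_series (/ q) = / Rpower q s * geom_series 1).
{ assert (h := geom_series_scale (/ q) ltac:(lra)). rewrite Rinv_r in h by lra.
  rewrite h. field. lra. }
assert (hy1 : Rpower x s <= 1) by (apply Rpower_le_1; lra).
assert (hyq : / Rpower q s <= Rpower x s)
  by (rewrite <- Rpower_inv_base by lra; apply Rle_Rpower_l; lra).
split.
- apply Rle_trans with (geom_series (/ q)); [|apply geom_series_le_incr; lra].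
  rewrite hS1q. assert (0 < / Rpower q s) by (apply Rinv_0_lt_compat; lra).
  assert (0 < / Rpower q s * geom_series 1) by nra. nra.
- apply Rle_trans with (geom_series 1); [apply geom_series_le_incr; lra|].
  assert (1 <= Rpower q s * Rpower x s).
  { apply Rmult_le_reg_l with (/ Rpower q s); [apply Rinv_0_lt_compat; lra|].
    rewrite <- Rmult_assoc, Rinv_l, Rmult_1_l, Rmult_1_r by lra. exact hyq. }
  nra.
Qed.

Lemma geom_series_ratio n x : (/ q) ^ n < x <= 1 ->
  / Rpower q s * geom_series 1 * Rpower x s <= geom_series x <= Rpower q s * geom_series 1 * Rpower x s.
Proof.
assert (hsig : 0 < Rpower q s) by apply Rpower_pos.
revert x; induction n as [|n IH]; intros x hx; [simpl in hx; lra|].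
destruct (Rlt_le_dec (/ q) x) as [hxq | hxq]; [apply geom_series_ratio_top; lra|].
assert (hx0 : 0 < x) by (generalize (pow_lt (/ q) (S n) ltac:(apply Rinv_0_lt_compat; lra)); lra).
assert (hqx : (/ q) ^ n < q * x <= 1).
{ split.
  - replace ((/ q) ^ n) with (q * (/ q) ^ S n) by (simpl; field; lra).
    apply Rmult_lt_compat_l; lra.
  - apply Rmult_le_reg_l with (/ q); [apply Rinv_0_lt_compat; lra|].
    rewrite <- Rmult_assoc, Rinv_l, Rmult_1_l, Rmult_1_r by lra. exact hxq. }
specialize (IH _ hqx).
rewrite geom_series_scale, <- Rpower_mult_distr in IH by lra.
destruct IH as [IH1 IH2]; split; apply Rmult_le_reg_l with (Rpower q s); auto; nra.
Qed.

Definition geom_partial (N : nat) (x : R) : R := sum_f_R0 (fun n => geom_pair n x) N.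

Lemma geom_tail_le N x : 0 <= x <= 1 ->
  0 <= geom_series x - geom_partial N x <= geom_series 1 - geom_partial N 1.
Proof.
intros hx. unfold geom_series, geom_partial.
rewrite (Series_incr_n (fun n => geom_pair n x) (S N)), (Series_incr_n (fun n => geom_pair n 1) (S N))
  by (lia || (apply ex_series_geom_pair; lra)).
simpl pred.
match goal with |- 0 <= ?a + ?b - ?a <= ?c + ?d - ?c =>
  replace (a + b - a) with b by ring; replace (c + d - c) with d by ring end.
split.
- apply Series_ge0; [intros k; apply geom_pair_ge0; lra|].
  apply (ex_series_incr_n (fun n => geom_pair n x) (S N)), ex_series_geom_pair; lra.
- apply Series_le.
  + intros k. split; [apply geom_pair_ge0 | apply geom_pair_le_incr]; lra.
  + apply (ex_series_incr_n (fun n => geom_pair n 1) (S N)), ex_series_geom_pair; lra.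
Qed.

Lemma geom_partial_error N n x : (/ q) ^ n < x <= 1 ->
  Rabs (geom_partial N x / geom_series 1 - Rpower x s)
  <= (Rpower q s - 1) + (geom_series 1 - geom_partial N 1) / geom_series 1.
Proof.
intros hx.
assert (hsig : 1 < Rpower q s) by (apply Rpower_gt_1; lra).
assert (hS1 := geom_series_1_pos).
assert (hx0 : 0 < x) by (generalize (pow_lt (/ q) n ltac:(apply Rinv_0_lt_compat; lra)); lra).
destruct (geom_series_ratio n x hx) as [lo hi].
destruct (geom_tail_le N x ltac:(lra)) as [t1 t2].
assert (hy0 : 0 < Rpower x s) by apply Rpower_pos.
assert (hy1 : Rpower x s <= 1) by (apply Rpower_le_1; lra).
set (sig := Rpower q s) in *. set (S1 := geom_series 1) in *. set (y := Rpower x s) in *.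
set (P := geom_partial N x) in *. set (Sx := geom_series x) in *.
assert (hinv : 1 - (sig - 1) <= / sig).
{ apply Rmult_le_reg_l with sig; [lra|]. rewrite Rinv_r by lra. nra. }
assert (up : P / S1 <= y + (sig - 1)).
{ apply Rmult_le_reg_l with S1; [exact hS1|]. replace (S1 * (P / S1)) with P by (field; lra).
  assert (0 <= S1 * (sig - 1) * (1 - y)) by (apply Rmult_le_pos; nra). nra. }
assert (down : y - (sig - 1) - (S1 - geom_partial N 1) / S1 <= P / S1).
{ apply Rmult_le_reg_l with S1; [exact hS1|].
  replace (S1 * (P / S1)) with P by (field; lra).
  replace (S1 * (y - (sig - 1) - (S1 - geom_partial N 1) / S1))
    with (S1 * y - S1 * (sig - 1) - (S1 - geom_partial N 1)) by (field; lra).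
  assert ((1 - (sig - 1)) * (S1 * y) <= / sig * (S1 * y)) by (apply Rmult_le_compat_r; nra).
  assert (0 <= S1 * (sig - 1) * (1 - y)) by (apply Rmult_le_pos; nra). nra. }
assert (0 <= (S1 - geom_partial N 1) / S1) by (apply Rdiv_le_0_compat; lra).
apply Rabs_le. lra.
Qed.

Lemma geom_tail_small eps : 0 < eps -> exists N, geom_series 1 - geom_partial N 1 < eps.
Proof.
intros heps.
assert (h := Series_correct _ (ex_series_geom_pair 1 ltac:(lra))).
apply is_series_Reals in h. destruct (h eps heps) as [N HN].
exists N. specialize (HN N (le_n N)). unfold R_dist in HN.
apply Rabs_def2 in HN. unfold geom_series, geom_partial. lra.
Qed.

(* The [2N+2] nodes [q^e], [-N-1 <= e <= N], listed in increasing order. *)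
Lemma geom_partial_nodes N x :
  geom_partial N x = sum_f_R0 (fun j => geom_term (INR j - INR (S N)) x) (2 * N + 1).
Proof.
induction N as [|N IH].
- unfold geom_partial, geom_pair. simpl.
  replace (0 - 1) with (- (1)) by ring. replace (1 - 1) with 0 by ring. ring.
- unfold geom_partial in *.
  rewrite tech5, IH.
  replace (2 * S N + 1)%nat with (S (S (2 * N + 1))) by lia.
  rewrite (tech5 _ (S (2 * N + 1))), (decomp_sum _ (S (2 * N + 1))) by lia.
  change (Nat.pred (S (2 * N + 1))) with (2 * N + 1)%nat.
  rewrite (sum_eq (fun i => geom_term (INR (S i) - INR (S (S N))) x)
                  (fun i => geom_term (INR i - INR (S N)) x))
    by (intros i _; rewrite !(S_INR i), (S_INR (S N)); f_equal; ring).
  unfold geom_pair.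
  replace (INR (S (S (2 * N + 1))) - INR (S (S N))) with (INR (S N))
    by (rewrite !S_INR, plus_INR, mult_INR; simpl; ring).
  replace (INR 0 - INR (S (S N))) with (- INR (S (S N))) by (simpl; ring).
  ring.
Qed.

End GeometricSeries.

Lemma Rpower_uniform_approx s eta eps : 0 < s < 1 -> 0 < eta -> 0 < eps ->
  exists (m : nat) (t w : nat -> R),
    0 < t 0%nat /\ (forall i j, (i < j)%nat -> t i < t j) /\ (forall j, 0 < w j) /\
    forall x, eta <= x <= 1 ->
      Rabs (sum_f_R0 (fun j => w j * x / (x + t j)) m - Rpower x s) <= eps.
Proof.
intros hs heta heps.
set (d := eps / 2).
set (q := Rpower (1 + d) (/ s)).
assert (hd : 0 < d) by (unfold d; lra).
assert (hq : 1 < q).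
{ apply Rpower_gt_1; [lra | apply Rinv_0_lt_compat; lra]. }
assert (hsig : Rpower q s = 1 + d).
{ unfold q. rewrite Rpower_mult, Rinv_l, Rpower_1; lra. }
set (S1 := geom_series s q 1).
assert (hS1 : 0 < S1) by (apply geom_series_1_pos; auto).
destruct (geom_tail_small s q hs hq (S1 * d) ltac:(nra)) as [N HN].
destruct (pow_lt_1_zero (/ q)) with (y := eta) as [N0 HN0]; auto.
{ rewrite Rabs_pos_eq by (apply Rlt_le, Rinv_0_lt_compat; lra).
  rewrite <- Rinv_1. apply Rinv_lt_contravar; lra. }
exists (2 * N + 1)%nat, (fun j => Rpower q (INR j - INR (S N))),
  (fun j => Rpower q (s * (INR j - INR (S N))) / S1).
repeat split.
- apply Rpower_pos.
- intros i j hij. apply Rpower_lt; [exact hq|]. apply lt_INR in hij. lra.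
- intros j. apply Rdiv_lt_0_compat; [apply Rpower_pos | exact hS1].
- intros x hx.
  rewrite (sum_eq _ (fun j => geom_term s q (INR j - INR (S N)) x * / S1))
    by (intros j _; unfold geom_term; field; split; [lra|]; generalize (Rpower_pos q (INR j - INR (S N))); lra).
  rewrite <- scal_sum, <- geom_partial_nodes, Rmult_comm.
  assert (hpow : (/ q) ^ N0 < x).
  { specialize (HN0 N0 (le_n N0)). rewrite Rabs_pos_eq in HN0; [lra|].
    apply pow_le, Rlt_le, Rinv_0_lt_compat; lra. }
  eapply Rle_trans; [apply (geom_partial_error s q hs hq N N0); lra|].
  fold S1. rewrite hsig.
  assert ((S1 - geom_partial s q N 1) / S1 <= d).
  { apply Rmult_le_reg_l with S1; [exact hS1|].
    replace (S1 * ((S1 - geom_partial s q N 1) / S1)) with (S1 - geom_partial s q N 1) by (field; lra).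
    fold S1 in HN. lra. }
  unfold d in *. lra.
Qed.

Module PartialFractions.
Import all_boot all_order all_algebra zify ring polyrcf Rstruct.
Import Order.TTheory GRing.Theory Num.Theory.
Local Open Scope ring_scope.

Section ProdXsubC.
Variable R : idomainType.

Lemma size_index_enum_ord m : size (index_enum 'I_m) = m.
Proof. by rewrite -[RHS]card_ord cardE enumT [index_enum _]unlock. Qed.

Lemma horner_prod_XsubC_ord m (c : 'I_m -> R) (P : pred 'I_m) x :
  (\prod_(l < m | P l) ('X - (c l)%:P)).[x] = \prod_(l < m | P l) (x - c l).
Proof. by rewrite horner_prod; apply: eq_bigr => l _; rewrite hornerXsubC. Qed.

Lemma size_prod_XsubC_neq m (c : 'I_m -> R) i :
  leq (size (\prod_(l < m | l != i) ('X - (c l)%:P))) m.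
Proof.
rewrite -big_filter size_prod_XsubC size_filter.
have := count_predC (pred1 i) (index_enum 'I_m).
rewrite (count_uniq_mem i (index_enum_uniq 'I_m)) mem_index_enum size_index_enum_ord => hm.
by rewrite -[X in (_ < X)%N]hm add1n ltnS; apply: eq_leq; apply: eq_count.
Qed.

Lemma size_sub_prod_XsubC m (c d : 'I_m -> R) :
  leq (size (\prod_(l < m) ('X - (c l)%:P) - \prod_(l < m) ('X - (d l)%:P))) m.
Proof.
have sc := size_prod_XsubC (index_enum 'I_m) c.
have sd := size_prod_XsubC (index_enum 'I_m) d.
rewrite size_index_enum_ord in sc sd.
apply/leq_sizeP => j; rewrite leq_eqVlt coefB => /orP[/eqP <-|jm]; last first.
  by rewrite !nth_default ?subrr ?sc ?sd.
have /monicP := monic_prod_XsubC (index_enum 'I_m) xpredT c.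
have /monicP := monic_prod_XsubC (index_enum 'I_m) xpredT d.
by rewrite /lead_coef sc sd /= => -> ->; rewrite subrr.
Qed.

Lemma size_sum_le I (r : seq I) (F : I -> {poly R}) n :
  (forall i, leq (size (F i)) n) -> leq (size (\sum_(i <- r) F i)) n.
Proof.
move=> hF; elim/big_ind: _ => //; first by rewrite size_poly0.
by move=> p q hp hq; rewrite (leq_trans (size_polyD p q)) // geq_max hp hq.
Qed.

Lemma poly_eq0_ord_roots m (p : {poly R}) (r : 'I_m -> R) :
  leq (size p) m -> injective r -> (forall k, root p (r k)) -> p = 0.
Proof.
move=> sp ir rt; apply: (@roots_geq_poly_eq0 _ _ [seq r k | k <- enum 'I_m]).
- by apply/allP => y /mapP [k _ ->].
- by rewrite map_inj_uniq ?enum_uniq.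
- by rewrite size_map size_enum_ord.
Qed.

End ProdXsubC.
Arguments poly_eq0_ord_roots {R m p r}.

Section InverseFracSum.
Variable R : rcfType.
Variables (m : nat) (t w : nat -> R) (c : R).
Hypotheses (t0_gt0 : 0 < t 0) (t_incr : forall i j, (i < j)%N -> t i < t j)
  (w_gt0 : forall j, 0 < w j) (c_gt0 : 0 < c).

Lemma t_le i j : (i <= j)%N -> t i <= t j.
Proof. by rewrite leq_eqVlt => /orP[/eqP -> // | /(t_incr _ _) /ltW]. Qed.

Lemma t_gt0 i : 0 < t i.
Proof. by case: i => [// | i]; exact: lt_trans t0_gt0 (t_incr _ _ (ltn0Sn i)). Qed.

Lemma ord_neq (l i : 'I_m) : l != i -> nat_of_ord l <> nat_of_ord i.
Proof. by move=> /eqP li e; apply: li; apply: val_inj. Qed.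

Let K := c + \sum_(j < m) w j.
Let Q := \prod_(j < m) ('X - (- t j)%:P).
Let L (j : 'I_m) := \prod_(l < m | l != j) ('X - (- t l)%:P).
(* Numerator of [c + \sum_j w_j x / (x + t_j)] over the common denominator [Q], *)
(* using [w_j x / (x + t_j) = w_j - w_j t_j / (x + t_j)].                        *)
Let N := K *: Q - \sum_(j < m) (w j * t j) *: L j.

Lemma Q_eval x : Q.[x] = \prod_(l < m) (x + t l).
Proof. by rewrite horner_prod_XsubC_ord; apply: eq_bigr => l _; rewrite opprK. Qed.

Lemma L_eval j x : (L j).[x] = \prod_(l < m | l != j) (x + t l).
Proof. by rewrite horner_prod_XsubC_ord; apply: eq_bigr => l _; rewrite opprK. Qed.

Lemma Q_split x (j : 'I_m) : Q.[x] = (x + t j) * (L j).[x].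
Proof. by rewrite Q_eval L_eval (bigD1 j). Qed.

Lemma N_horner x : N.[x] = K * Q.[x] - \sum_(j < m) w j * t j * (L j).[x].
Proof.
rewrite /N hornerD hornerN hornerZ horner_sum; congr (_ - _).
by apply: eq_bigr => j _; rewrite hornerZ.
Qed.

Lemma N_eval x : (forall j : 'I_m, x + t j != 0) ->
  N.[x] = Q.[x] * (c + \sum_(j < m) w j * x / (x + t j)).
Proof.
move=> nz; rewrite N_horner /K mulrDl mulrDr mulr_suml mulr_sumr mulrC -addrA; congr (_ + _).
rewrite -sumrB; apply: eq_bigr => j _; rewrite (Q_split x j).
by field; rewrite nz.
Qed.

Let Pr (i : 'I_m) := \prod_(l < m | l != i) (t l - t i).

Lemma N_at_node (i : 'I_m) : N.[- t i] = - (w i * t i * Pr i).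
Proof.
rewrite N_horner (Q_split _ i) addNr mul0r mulr0 sub0r; congr (- _).
rewrite (bigD1 i) //= big1 ?addr0.
  by rewrite L_eval /Pr; congr (_ * _); apply: eq_bigr => l _; rewrite addrC.
move=> j ji; rewrite L_eval (bigD1 i) /=; last by rewrite eq_sym.
by rewrite addNr mul0r mulr0.
Qed.

Lemma N_at_0 : 0 < N.[0].
Proof.
rewrite N_eval; last by move=> j; rewrite add0r gt_eqF // t_gt0.
rewrite big1 ?addr0 => [|j _]; last by rewrite mulr0 mul0r.
by rewrite pmulr_rgt0 // Q_eval; apply: prodr_gt0 => l _; rewrite add0r t_gt0.
Qed.

Lemma Pr_first (i : 'I_m) : nat_of_ord i = 0%N -> 0 < Pr i.
Proof. by move=> i0; apply: prodr_gt0 => l /ord_neq li; rewrite subr_gt0 t_incr //; lia. Qed.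

(* [Pr i] has the sign [(-1)^i]. *)
Lemma Pr_next (i j : 'I_m) : nat_of_ord j = (nat_of_ord i).+1 -> Pr i * Pr j < 0.
Proof.
move=> ji.
have jni : j != i by apply/eqP => e; move: ji; rewrite e; lia.
rewrite /Pr (bigD1 j) //= [X in _ * X](bigD1 i) /=; last by rewrite eq_sym.
set A := \prod_(l < m | _) (t l - t i).
set B := \prod_(l < m | _) (t l - t j).
have AB : 0 < A * B.
  rewrite /A /B [X in _ * X](eq_bigl (fun l => (l != i) && (l != j))); last by move=> l; rewrite andbC.
  rewrite -big_split /=; apply: prodr_gt0 => l /andP[/ord_neq li /ord_neq lj].
  have [lt|gt] : (nat_of_ord l < nat_of_ord i)%N \/ (nat_of_ord j < nat_of_ord l)%N by lia.
    by rewrite -mulrNN !opprB; apply: mulr_gt0; rewrite subr_gt0; apply: t_incr; lia.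
  by apply: mulr_gt0; rewrite subr_gt0; apply: t_incr; lia.
have tij : t i < t j by apply: t_incr; lia.
have -> : (t j - t i) * A * ((t i - t j) * B) = - ((t j - t i) ^+ 2) * (A * B) by ring.
by rewrite pmulr_llt0 // oppr_lt0 exprn_gt0 // subr_gt0.
Qed.

(* Right end of the interval [(- t_i, - t_(i-1))], with [t_(-1) = 0], that contains *)
(* the [i]-th root of [N].                                                        *)
Let hi (i : 'I_m) := if nat_of_ord i is k.+1 then - t k else 0.

Lemma N_root_interlaced (i : 'I_m) : exists2 r, - t i < r < hi i & root N r.
Proof.
have le_node_hi : - t i <= hi i.
  rewrite /hi; case ei: (nat_of_ord i) => [|k]; first by rewrite oppr_le0 ltW // t_gt0.
  by rewrite lerN2 ltW // t_incr.
suff /(poly_ivtoo le_node_hi) [r] : N.[- t i] * N.[hi i] < 0.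
  by rewrite in_itv /= => ri rr; exists r.
rewrite N_at_node /hi; case ei: (nat_of_ord i) => [|k].
  by rewrite mulNr oppr_lt0 !mulr_gt0 ?N_at_0 ?w_gt0 ?t_gt0 ?Pr_first.
have km : (k < m)%N by move: (ltn_ord i); rewrite ei; lia.
have := N_at_node (Ordinal km); rewrite /= => ->.
rewrite mulrNN.
have -> : w k.+1 * t k.+1 * Pr i * (w k * t k * Pr (Ordinal km))
        = (w k.+1 * t k.+1 * (w k * t k)) * (Pr (Ordinal km) * Pr i) by ring.
by rewrite pmulr_rlt0 ?mulr_gt0 ?w_gt0 ?t_gt0 // Pr_next //= ei.
Qed.

Section Roots.
Variable r : 'I_m -> R.
Hypotheses (r_gt_node : forall i : 'I_m, - t i < r i) (r_lt_hi : forall i, r i < hi i)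
  (r_root : forall i, root N (r i)).

Lemma r_lt_node {i j : 'I_m} : (nat_of_ord i < nat_of_ord j)%N -> r j < - t i.
Proof.
move=> ij; have := r_lt_hi j; rewrite /hi; case ej: (nat_of_ord j) => [|k].
  by move: ij; rewrite ej.
by move=> h; apply: (lt_le_trans h); rewrite lerN2; apply: t_le; lia.
Qed.

Lemma r_lt0 (i : 'I_m) : r i < 0.
Proof.
have := r_lt_hi i; rewrite /hi; case: (nat_of_ord i) => [//|k] h.
by apply: lt_trans h _; rewrite oppr_lt0 t_gt0.
Qed.

Lemma r_decr {i j : 'I_m} : (nat_of_ord i < nat_of_ord j)%N -> r j < r i.
Proof. by move=> ij; apply: lt_trans (r_lt_node ij) (r_gt_node i). Qed.

Lemma r_inj : injective r.
Proof.
move=> i j e; apply: val_inj; case: (ltngtP (nat_of_ord i) (nat_of_ord j)) => // h.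
  by move: (r_decr h); rewrite e ltxx.
by move: (r_decr h); rewrite e ltxx.
Qed.

Lemma interlace_factor_gt0 (i l : 'I_m) : l != i -> 0 < (r i + t l) * (r i - r l).
Proof.
move=> /ord_neq li.
have [lt|gt] : (nat_of_ord l < nat_of_ord i)%N \/ (nat_of_ord i < nat_of_ord l)%N by lia.
  rewrite -mulrNN; apply: mulr_gt0.
    by rewrite oppr_gt0 -ltrBrDr sub0r r_lt_node.
  by rewrite opprB subr_gt0 r_decr.
apply: mulr_gt0; last by rewrite subr_gt0 r_decr.
rewrite -ltrBlDr sub0r; apply: le_lt_trans (r_gt_node i); rewrite lerN2; apply: t_le; lia.
Qed.

Let U := \prod_(l < m) ('X - (r l)%:P).
Let V (i : 'I_m) := \prod_(l < m | l != i) ('X - (r l)%:P).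

Lemma U_root (k : 'I_m) : U.[r k] = 0.
Proof. by rewrite horner_prod_XsubC_ord (bigD1 k) //= subrr mul0r. Qed.

Lemma V_root (i k : 'I_m) : i != k -> (V i).[r k] = 0.
Proof. by move=> ik; rewrite horner_prod_XsubC_ord (bigD1 k) //= ?subrr ?mul0r // eq_sym. Qed.

Lemma U_split x (i : 'I_m) : U.[x] = (x - r i) * (V i).[x].
Proof. by rewrite !horner_prod_XsubC_ord (bigD1 i). Qed.

Lemma V_at_root_neq0 (i : 'I_m) : (V i).[r i] != 0.
Proof.
rewrite horner_prod_XsubC_ord; apply/prodf_neq0 => l li; rewrite subr_eq0; apply/eqP => e.
by move: li; rewrite (r_inj _ _ e) eqxx.
Qed.

Lemma N_factor : N = K *: U.
Proof.
apply/eqP; rewrite -subr_eq0; apply/eqP; apply: (poly_eq0_ord_roots _ r_inj).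
  rewrite /N addrAC -scalerBr (leq_trans (size_polyD _ _)) // geq_max.
  rewrite (leq_trans (size_scale_leq _ _)) ?size_sub_prod_XsubC //= size_polyN.
  by apply: size_sum_le => j; rewrite (leq_trans (size_scale_leq _ _)) ?size_prod_XsubC_neq.
move=> k; rewrite /root hornerD hornerN hornerZ U_root mulr0 subr0.
exact: r_root.
Qed.

Let g (i : 'I_m) := Q.[r i] / (V i).[r i].

(* Lagrange interpolation of [Q] at the roots of the monic polynomial [U]. *)
Lemma Q_interpolation : Q = U + \sum_(i < m) g i *: V i.
Proof.
apply/eqP; rewrite -subr_eq0 opprD addrA; apply/eqP.
apply: (poly_eq0_ord_roots _ r_inj).
  rewrite (leq_trans (size_polyD _ _)) // geq_max size_sub_prod_XsubC size_polyN.
  by apply: size_sum_le => j; rewrite (leq_trans (size_scale_leq _ _)) ?size_prod_XsubC_neq.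
move=> k; rewrite /root !(hornerD, hornerN) U_root subr0 horner_sum.
rewrite (bigD1 k) //= big1 ?addr0; last by move=> i ik; rewrite hornerZ V_root ?mulr0.
by rewrite hornerZ /g divfK ?subrr ?V_at_root_neq0.
Qed.

Lemma g_gt0 (i : 'I_m) : 0 < g i.
Proof.
have QV : 0 < Q.[r i] * (V i).[r i].
  rewrite Q_eval horner_prod_XsubC_ord (bigD1 i) //= -mulrA -big_split /=.
  apply: mulr_gt0; first by rewrite -ltrBlDr sub0r r_gt_node.
  by apply: prodr_gt0 => l li; apply: interlace_factor_gt0.
have Vi := V_at_root_neq0 i.
have -> : g i = Q.[r i] * (V i).[r i] / (V i).[r i] ^+ 2 by rewrite /g expr2; field.
by rewrite divr_gt0 // exprn_even_gt0.
Qed.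

Lemma inv_frac_sum_roots : exists l : seq (R * R),
  (forall p, p \in l -> 0 <= p.1 /\ 0 < p.2) /\
  forall x, 0 <= x ->
    (c + \sum_(j < m) w j * x / (x + t j))^-1 = K^-1 + \sum_(p <- l) p.1 / (x + p.2).
Proof.
have K_gt0 : 0 < K by rewrite ltr_wpDr // sumr_ge0 // => j _; rewrite ltW.
exists [seq (g i / K, - r i) | i <- index_enum 'I_m]; split.
  move=> p /mapP [i _ ->] /=.
  by rewrite divr_ge0 ?oppr_gt0 ?r_lt0 // ltW // ?g_gt0.
move=> x x0; rewrite big_map /=.
have xt j : 0 < x + t j by rewrite ltr_wpDl // t_gt0.
have xr j : 0 < x - r j by rewrite subr_gt0; exact: lt_le_trans (r_lt0 j) x0.
have Ux : 0 < U.[x] by rewrite horner_prod_XsubC_ord; apply: prodr_gt0 => l _.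
have Qx : 0 < Q.[x] by rewrite Q_eval; apply: prodr_gt0 => l _.
have Vx i : 0 < (V i).[x] by rewrite horner_prod_XsubC_ord; apply: prodr_gt0 => l _.
have -> : c + \sum_(j < m) w j * x / (x + t j) = K * U.[x] / Q.[x].
  have := @N_eval x (fun j => lt0r_neq0 (xt j)).
  by rewrite N_factor hornerZ => ->; field; apply: lt0r_neq0.
rewrite invf_div {1}Q_interpolation hornerD horner_sum mulrDl mulr_suml; congr (_ + _).
  by field; rewrite ?lt0r_neq0.
apply: eq_bigr => i _; rewrite hornerZ (U_split x i); field.
by rewrite ?lt0r_neq0 ?Vx ?xr.
Qed.

End Roots.

Lemma inv_frac_sum_pfrac : exists l : seq (R * R),
  (forall p, p \in l -> 0 <= p.1 /\ 0 < p.2) /\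
  forall x, 0 <= x ->
    (c + \sum_(j < m) w j * x / (x + t j))^-1
    = (c + \sum_(j < m) w j)^-1 + \sum_(p <- l) p.1 / (x + p.2).
Proof.
have root_i (i : 'I_m) : exists r, (- t i < r < hi i) /\ root N r.
  by have [r ri rr] := N_root_interlaced i; exists r.
have [r hr] := fin_all_exists root_i.
by apply: (@inv_frac_sum_roots r) => i; have [/andP[]] := hr i.
Qed.

End InverseFracSum.

Lemma sum_f_R0_big (f : nat -> R) n : sum_f_R0 f n = \sum_(j < n.+1) f j.
Proof.
elim: n => [|n IH]; first by rewrite big_ord_recr big_ord0 /= add0r.
by rewrite big_ord_recr /= IH.
Qed.

Lemma pfrac_big l x : pfrac l x = \sum_(p <- l) p.1 / (x + p.2).
Proof. by elim: l => [|p l IH]; rewrite ?big_nil ?big_cons //= IH. Qed.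

Lemma In_mem (T : eqType) (x : T) l : In x l -> x \in l.
Proof. by elim: l => //= y l IH [-> | /IH]; rewrite in_cons ?eqxx // => ->; rewrite orbT. Qed.

Local Close Scope ring_scope.

Lemma inv_frac_sum_pfrac_R (c : R) (m : nat) (t w : nat -> R) :
  0 < c -> 0 < t 0%nat -> (forall i j, (i < j)%coq_nat -> t i < t j) -> (forall j, 0 < w j) ->
  exists l, pfrac_pos l /\ forall x, 0 <= x ->
    / (c + sum_f_R0 (fun j => w j * x / (x + t j)) m) = / (c + sum_f_R0 w m) + pfrac l x.
Proof.
move=> c_gt0 t0_gt0 t_incr w_gt0.
have [l [hl hid]] := @inv_frac_sum_pfrac _ m.+1 t w c (introT RltP t0_gt0)
  (fun i j ij => introT RltP (t_incr i j (elimT ssrnat.ltP ij)))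
  (fun j => introT RltP (w_gt0 j)) (introT RltP c_gt0).
exists l; split.
  by move=> p /In_mem /hl [/RleP h1 /RltP h2].
move=> x /RleP x0.
by rewrite pfrac_big !sum_f_R0_big; apply: hid.
Qed.

End PartialFractions.

Lemma Rabs_inv_perturb_le y a k ep e0 : 0 < e0 <= y -> 0 <= k -> Rabs (a - y) <= ep ->
  Rabs (/ (y + k) - / (k + ep + a)) <= 2 * ep / (e0 * e0).
Proof.
intros hy hk ha. apply Rabs_le_between in ha.
replace (/ (y + k) - / (k + ep + a)) with ((ep + a - y) / ((y + k) * (k + ep + a)))
  by (field; split; lra).
rewrite Rabs_pos_eq by (apply Rdiv_le_0_compat; nra).
unfold Rdiv. apply Rmult_le_compat; [lra | apply Rlt_le, Rinv_0_lt_compat; nra | lra |].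
apply Rinv_le_contravar; [nra|]. apply Rmult_le_compat; lra.
Qed.

Lemma inv_rpower_add_in_scaled_B1 eta s k : 0 < eta <= 1 -> 0 < s < 1 -> 0 <= k ->
  in_scaled_B1 eta (/ Rpower eta s) (fun x => / (Rpower x s + k)).
Proof.
intros heta hs hk.
set (e0 := Rpower eta s).
assert (he0 : 0 < e0) by apply Rpower_pos.
apply in_scaled_B1_approx. intros eps heps.
set (ep := eps * e0 * e0 / 2).
assert (hep : 0 < ep) by (unfold ep; apply Rdiv_lt_0_compat; [repeat apply Rmult_lt_0_compat|]; lra).
destruct (Rpower_uniform_approx s eta ep hs ltac:(lra) hep) as [m [t [w [ht0 [ht [hw happ]]]]]].
set (A x := sum_f_R0 (fun j => w j * x / (x + t j)) m).
destruct (PartialFractions.inv_frac_sum_pfrac_R (k + ep) m t w ltac:(lra) ht0 ht hw)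
  as [l [hl hinv]].
assert (hA : forall x, eta <= x <= 1 -> e0 <= Rpower x s /\ Rabs (A x - Rpower x s) <= ep).
{ intros x hx. split; [apply Rle_Rpower_l; lra | apply happ, hx]. }
set (c0 := / (k + ep + sum_f_R0 w m)).
exists (fun x => c0 + pfrac l x). split.
- apply in_scaled_B1_le with (c0 + pfrac l eta).
  + unfold c0. rewrite <- hinv by lra. fold (A eta).
    destruct (hA eta ltac:(lra)) as [h1 h2]. apply Rabs_le_between in h2.
    apply Rinv_le_contravar; lra.
  + apply const_add_pfrac_in_scaled_B1; [lra | | exact hl].
    unfold c0. apply Rlt_le, Rinv_0_lt_compat.
    assert (0 <= sum_f_R0 w m) by (apply cond_pos_sum; intros j; apply Rlt_le, hw). lra.
- intros x hx. unfold c0. rewrite <- hinv by lra. fold (A x).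
  destruct (hA x hx) as [h1 h2].
  replace eps with (2 * ep / (e0 * e0)) by (unfold ep; field; lra).
  apply Rabs_inv_perturb_le; lra.
Qed.

Theorem corollary4p2 (eta s k : R) :
  0 < eta < 1 -> 0 < s < 1 -> 0 <= k ->
  in_L1D eta (fun x => / (Rpower x s + k)).
Proof.
intros heta hs hk. exists (/ Rpower eta s). split.
- apply Rinv_0_lt_compat, Rpower_pos.
- apply inv_rpower_add_in_scaled_B1; lra.
Qed.
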